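(* Let $(r_{i,j})_{i\ge 0,\, j\in\mathbb{Z}}$ be the Pascal rhombus, defined by $r_{0,0}=r_{1,-1}=r_{1,0}=r_{1,1}=1$, $r_{0,j}=0$ for $j\neq 0$, $r_{1,j}=0$ for $j\notin\{-1,0,1\}$, and $r_{i,j}=r_{i-1,j-1}+r_{i-1,j}+r_{i-1,j+1}+r_{i-2,j}$ for $i\ge 2$, $j\in\mathbb{Z}$. For every integer $j\ge 0$, the generating function of the $j$th column is $$L_j(x):=\sum_{i\ge 0} r_{i,j}x^i=\frac{F(x)^{j+1}\,C\big(F(x)^2\big)^j}{x\big(1-2F(x)^2C(F(x)^2)\big)},$$ where $F(x)=\frac{x}{1-x-x^2}$ and $C(x)=\frac{1-\sqrt{1-4x}}{2x}$. Moreover, for $0\le j\le i$, $$r_{i,j}=\sum_{m=0}^{i}\sum_{l=0}^{i-j-2m}\binom{2m+j}{m}\binom{l+j+2m}{l}\binom{l}{i-j-2m-l}.$$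
   Context: $F(x)$ is the generating function of the Fibonacci numbers and $C(x)$ that of the Catalan numbers; $C(F(x)^2)$ denotes composition of formal power series. Sums with upper limit smaller than the lower limit are empty. *)

From mathcomp Require Import all_boot all_order all_algebra.
Set Implicit Arguments. Unset Strict Implicit. Unset Printing Implicit Defensive.
Import Order.TTheory GRing.Theory Num.Theory.
Local Open Scope ring_scope.

Fixpoint rhombus (i : nat) (j : int) : nat :=
  match i with
  | 0%N => if j == 0 then 1%N else 0%N
  | 1%N => if (-1 <= j) && (j <= 1) then 1%N else 0%N
  | (k.+1 as i').+1 =>
      (rhombus i' (j - 1) + rhombus i' j + rhombus i' (j + 1) + rhombus k j)%N
  end.

Definition ps := nat -> int.
Definition ps1 : ps := fun n => (n == 0%N)%:R.
Definition psX : ps := fun n => (n == 1%N)%:R.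
Definition psadd (a b : ps) : ps := fun n => a n + b n.
Definition psopp (a : ps) : ps := fun n => - a n.
Definition psscale (c : int) (a : ps) : ps := fun n => c * a n.
Definition psmul (a b : ps) : ps := fun n => \sum_(k < n.+1) a k * b (n - k)%N.
Definition psexp (a : ps) (k : nat) : ps := iter k (psmul a) ps1.
(* composition c(g(x)); meaningful (and exact) when g 0 = 0, since then
   g^k has no terms of degree < k *)
Definition pscomp (c g : ps) : ps := fun n => \sum_(k < n.+1) c k * psexp g k n.

Fixpoint fib (n : nat) : nat :=
  match n with
  | 0%N => 0%N
  | 1%N => 1%N
  | (k.+1 as m).+1 => (fib m + fib k)%N
  end.
Definition catalan (n : nat) : nat := ('C(n.*2, n) %/ n.+1)%N.

(* F(x) = sum fib n x^n = x/(1-x-x^2);  C(x) = sum catalan n x^n *)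
Definition Fps : ps := fun n => (fib n)%:Z.
Definition Cps : ps := fun n => (catalan n)%:Z.

Definition Lps (j : nat) : ps := fun i => (rhombus i j%:Z)%:Z.

(* Let B_j(x) = sum_m C(2m+j, m) x^m, so that B_0 = (1 - 4x)^(-1/2).  The recurrences of
   central binomial coefficients and Catalan numbers give first-order differential equations
   for B_0 and x C(x), from which B_0^2 (1 - 4x) = 1, (1 - 2x C) B_0 = 1, C = 1 + x C^2 and
   B_j = C^j B_0.  Substituting x := F^2 and writing K = C(F^2), the series
   M_j = F^(j+1) K^j B_0(F^2) satisfy (1 - x - x^2) M_(j+1) = x (M_j + M_(j+2)), because
   F (1 - x - x^2) = x and K = 1 + F^2 K^2; this is the recurrence of the rhombus, hence
   M_j = x L_j, and (1 - 2 F^2 K) B_0(F^2) = 1 yields the closed form of L_j.  For the explicit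
   sum, expand M_j = sum_m C(2m+j, m) F^(2m+j+1) and use
   F^(k+1) = x^(k+1) (1 - x - x^2)^(-(k+1)) = x^(k+1) sum_l C(l+k, l) x^l (1 + x)^l. *)

From mathcomp Require Import all_boot all_order all_algebra zify.
From Stdlib Require Import Ring FunctionalExtensionality.
Import Order.TTheory GRing.Theory Num.Theory.
Local Open Scope ring_scope.

(** * The ring of formal power series *)

Definition ps0 : ps := fun _ => 0.
Definition pssub (a b : ps) : ps := psadd a (psopp b).

Lemma ps_ext (a b : ps) : (forall n, a n = b n) -> a = b.
Proof. exact: functional_extensionality. Qed.

(* Ring laws are transferred from [{poly int}] through truncation below degree [N]. *)
Definition ps_trunc (N : nat) (a : ps) : {poly int} := \poly_(i < N) a i.
Definition eq_upto (N : nat) (p q : {poly int}) := forall n, (n < N)%N -> p`_n = q`_n.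

Lemma coef_ps_trunc {N} a {n} : (n < N)%N -> (ps_trunc N a)`_n = a n.
Proof. by move=> ltnN; rewrite coef_poly ltnN. Qed.

Lemma eq_upto_refl N p : eq_upto N p p.
Proof. by []. Qed.

Lemma eq_upto_trans {N p q r} : eq_upto N p q -> eq_upto N q r -> eq_upto N p r.
Proof. by move=> pq qr n ltnN; rewrite pq // qr. Qed.

Lemma eq_upto_mul {N p p' q q'} :
  eq_upto N p p' -> eq_upto N q q' -> eq_upto N (p * q) (p' * q').
Proof.
move=> pp' qq' n ltnN; rewrite !coefM; apply: eq_bigr => i _.
have ltiN : (i < N)%N by apply: leq_ltn_trans ltnN; rewrite -ltnS.
by rewrite pp' // qq' // (leq_ltn_trans (leq_subr _ _) ltnN).
Qed.

Lemma psmul_trunc {N} a b {n} :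
  (n < N)%N -> psmul a b n = (ps_trunc N a * ps_trunc N b)`_n.
Proof.
move=> ltnN; rewrite coefM; apply: eq_bigr => i _.
have ltiN : (i < N)%N by apply: leq_ltn_trans ltnN; rewrite -ltnS.
by rewrite !coef_ps_trunc // (leq_ltn_trans (leq_subr _ _) ltnN).
Qed.

Lemma ps_truncM {N} a b :
  eq_upto N (ps_trunc N (psmul a b)) (ps_trunc N a * ps_trunc N b).
Proof. by move=> n ltnN; rewrite coef_ps_trunc // (psmul_trunc _ _ ltnN). Qed.

Lemma ps_trunc1 {N} : eq_upto N (ps_trunc N ps1) 1.
Proof. by move=> n ltnN; rewrite coef_ps_trunc // coef1. Qed.

Lemma ps_trunc_exp {N} a k :
  eq_upto N (ps_trunc N (psexp a k)) (ps_trunc N a ^+ k).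
Proof.
elim: k => [|k IHk]; first exact: ps_trunc1.
apply: eq_upto_trans (ps_truncM _ _) _.
by rewrite exprS; apply: eq_upto_mul.
Qed.

Lemma mulpsA a b c : psmul a (psmul b c) = psmul (psmul a b) c.
Proof.
apply: ps_ext => n; have ltnN := ltnSn n.
rewrite !(psmul_trunc _ _ ltnN).
rewrite (eq_upto_mul (eq_upto_refl _ _) (ps_truncM b c) _ ltnN).
by rewrite (eq_upto_mul (ps_truncM a b) (eq_upto_refl _ _) _ ltnN) mulrA.
Qed.

Lemma mulpsC a b : psmul a b = psmul b a.
Proof. by apply: ps_ext => n; rewrite !(psmul_trunc _ _ (ltnSn n)) mulrC. Qed.

Lemma mul1ps a : psmul ps1 a = a.
Proof.
apply: ps_ext => n; have ltnN := ltnSn n.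
rewrite (psmul_trunc _ _ ltnN) (eq_upto_mul ps_trunc1 (eq_upto_refl _ _) _ ltnN).
by rewrite mul1r coef_ps_trunc.
Qed.

Lemma mulpsDl a b c : psmul (psadd a b) c = psadd (psmul a c) (psmul b c).
Proof.
by apply: ps_ext => n; rewrite /psadd /psmul -big_split; apply: eq_bigr => i _; rewrite mulrDl.
Qed.

Lemma ps_ring_theory : ring_theory ps0 ps1 psadd psmul pssub psopp (@eq ps).
Proof.
split=> //; try by move=> *; apply: ps_ext => n; rewrite /psadd /psopp /ps0;
  rewrite ?add0r ?subrr ?addrA // addrC.
- exact: mul1ps.
- exact: mulpsC.
- exact: mulpsA.
- exact: mulpsDl.
Qed.

Add Ring ps_ring : ps_ring_theory.

Lemma psmul_coef0 a b : psmul a b 0 = a 0 * b 0.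
Proof. by rewrite /psmul big_ord1. Qed.

Lemma psmulX_coef0 a : psmul psX a 0 = 0.
Proof. by rewrite psmul_coef0 mul0r. Qed.

Lemma psmulX_coefS a n : psmul psX a n.+1 = a n.
Proof.
rewrite /psmul 2!big_ord_recl big1 => [|i _]; last by rewrite /psX mul0r.
by rewrite /psX /= mul0r mul1r add0r addr0 subSS subn0.
Qed.

Lemma psexp0 a : psexp a 0 = ps1.
Proof. by []. Qed.

Lemma psexpS a k : psexp a k.+1 = psmul a (psexp a k).
Proof. by []. Qed.

Lemma psexpD a m k : psexp a (m + k) = psmul (psexp a m) (psexp a k).
Proof. by elim: m => [|m IHm]; rewrite ?mul1ps // addSn !psexpS IHm mulpsA. Qed.

Lemma psexpM a p m : psexp (psexp a p) m = psexp a (p * m).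
Proof. by elim: m => [|m IHm]; rewrite ?muln0 // psexpS IHm mulnS psexpD. Qed.

Lemma psexp_mul a b l : psexp (psmul a b) l = psmul (psexp a l) (psexp b l).
Proof. by elim: l => [|l IHl]; rewrite ?mul1ps // !psexpS IHl; ring. Qed.

Lemma psmul_Xexp_coef p a n :
  psmul (psexp psX p) a n = if (p <= n)%N then a (n - p)%N else 0.
Proof.
elim: p n => [|p IHp] n; first by rewrite mul1ps subn0.
rewrite psexpS -mulpsA; case: n => [|n]; first by rewrite psmulX_coef0.
by rewrite psmulX_coefS IHp ltnS subSS.
Qed.

Lemma psexp_1addX_coef l k : psexp (psadd ps1 psX) l k = 'C(l, k)%:Z.
Proof.
elim: l k => [|l IHl] k; first by rewrite /ps1; case: k.
rewrite psexpS mulpsDl mul1ps /psadd IHl; case: k => [|k].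
  by rewrite psmulX_coef0 addr0 !bin0.
by rewrite psmulX_coefS IHl binS PoszD addrC.
Qed.

Lemma psscale2 a : psscale 2 a = psadd a a.
Proof. by apply: ps_ext => n; rewrite /psscale /psadd; lia. Qed.

Lemma pssub_eq0 a b : pssub a b = ps0 -> a = b.
Proof.
move=> abE; apply: ps_ext => n; have := congr1 (fun f => f n) abE.
by rewrite /pssub /psadd /psopp /ps0 => /eqP; rewrite subr_eq0 => /eqP.
Qed.

Lemma psmulX_eq0 a : psmul psX a = ps0 -> a = ps0.
Proof. by move=> Xa0; apply: ps_ext => n; rewrite -psmulX_coefS Xa0. Qed.

(* [4x] spelled out as a sum, so that [ring] sees through it. *)
Definition ps4x : ps := psadd (psadd psX psX) (psadd psX psX).

Lemma psmul4x_coefS a n : psmul ps4x a n.+1 = 4 * a n.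
Proof. rewrite /ps4x !mulpsDl /psadd !psmulX_coefS; lia. Qed.

Lemma psmul4x_eq0 a : psmul ps4x a = ps0 -> a = ps0.
Proof.
move=> a4x0; apply: ps_ext => n; have := congr1 (fun f => f n.+1) a4x0.
rewrite psmul4x_coefS /ps0; lia.
Qed.

Lemma psmul_1sub4x_coef0 a : psmul (pssub ps1 ps4x) a 0 = a 0.
Proof. by rewrite psmul_coef0 /pssub /psadd /psopp /ps1 /ps4x /psadd /psX /= !addr0 mul1r. Qed.

Lemma psmul_1sub4x_coefS a n : psmul (pssub ps1 ps4x) a n.+1 = a n.+1 - 4 * a n.
Proof.
have -> : psmul (pssub ps1 ps4x) a = pssub a (psmul ps4x a) by ring.
by rewrite /pssub /psadd /psopp psmul4x_coefS.
Qed.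

Lemma coef_expr_lt (r : {poly int}) i n :
  r`_0 = 0 -> (n < i)%N -> (r ^+ i)`_n = 0.
Proof.
move=> r0; elim: i n => [|i IHi] n // ltni; rewrite exprS coefM big1 // => -[[|k] ltkn] _ /=.
  by rewrite r0 mul0r.
by rewrite IHi ?mulr0 //; lia.
Qed.

Lemma psexp_coef_lt g k n : g 0 = 0 -> (n < k)%N -> psexp g k n = 0.
Proof.
move=> g0 ltnk; rewrite -(coef_ps_trunc _ (ltnSn n)) (ps_trunc_exp _ _ _ (ltnSn n)).
by apply: coef_expr_lt; rewrite ?coef_ps_trunc.
Qed.

(** * Composition *)

Lemma pscomp_wide c {g N n} : g 0 = 0 -> (n < N)%N ->
  pscomp c g n = \sum_(k < N) c k * psexp g k n.
Proof.
move=> g0 ltnN; rewrite /pscomp -!(big_mkord xpredT (fun k => c k * psexp g k n)).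
rewrite (@big_cat_nat _ _ _ n.+1 0 N _ _ (leq0n _) ltnN) /= [X in _ + X]big1_seq ?addr0 // => k.
by rewrite mem_index_iota => /andP[_ /andP[ltnk _]]; rewrite psexp_coef_lt ?mulr0.
Qed.

Lemma psmul_pscomp_coef a c g n : g 0 = 0 ->
  psmul a (pscomp c g) n = \sum_(m < n.+1) c m * psmul a (psexp g m) n.
Proof.
move=> g0; transitivity (\sum_(k < n.+1) \sum_(m < n.+1) c m * (a k * psexp g m (n - k)%N)).
  apply: eq_bigr => k _; rewrite (pscomp_wide _ g0 (leq_ltn_trans (leq_subr k n) (ltnSn n))).
  by rewrite big_distrr; apply: eq_bigr => m _; rewrite mulrCA.
by rewrite exchange_big; apply: eq_bigr => m _; rewrite /psmul big_distrr.
Qed.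

Lemma eq_upto_comp {N} {p p' r : {poly int}} :
  r`_0 = 0 -> eq_upto N p p' -> eq_upto N (p \Po r) (p' \Po r).
Proof.
move=> r0 pp' n ltnN; apply/eqP; rewrite -subr_eq0 -coefB -linearB /=.
rewrite coef_comp_poly big1 // => i _.
have [ltiN|leNi] := ltnP i N; first by rewrite coefB pp' // subrr mul0r.
by rewrite coef_expr_lt ?mulr0 //; lia.
Qed.

Lemma coef_comp_ps_trunc N c (r : {poly int}) n :
  (ps_trunc N c \Po r)`_n = \sum_(k < N) c k * (r ^+ k)`_n.
Proof.
rewrite /ps_trunc poly_def linear_sum coef_sum; apply: eq_bigr => k _.
by rewrite /= comp_polyZ comp_Xn_poly coefZ.
Qed.

Lemma ps_trunc_comp {N} c g : g 0 = 0 ->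
  eq_upto N (ps_trunc N (pscomp c g)) (ps_trunc N c \Po ps_trunc N g).
Proof.
move=> g0 n ltnN; rewrite coef_ps_trunc // (pscomp_wide _ g0 ltnN) coef_comp_ps_trunc.
by apply: eq_bigr => k _; rewrite -(ps_trunc_exp _ _ _ ltnN) coef_ps_trunc.
Qed.

Section Composition.

Variable g : ps.
Hypothesis g0 : g 0 = 0.

Lemma pscompM a b : pscomp (psmul a b) g = psmul (pscomp a g) (pscomp b g).
Proof.
apply: ps_ext => n; have ltnN := ltnSn n.
have trg0 : (ps_trunc n.+1 g)`_0 = 0 by rewrite coef_ps_trunc.
rewrite (psmul_trunc _ _ ltnN) -(coef_ps_trunc _ ltnN) (ps_trunc_comp _ _ g0 _ ltnN).
rewrite (eq_upto_comp trg0 (ps_truncM _ _) _ ltnN) comp_polyM.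
by rewrite (eq_upto_mul (fun m h => esym (ps_trunc_comp a _ g0 m h))
                        (fun m h => esym (ps_trunc_comp b _ g0 m h)) _ ltnN).
Qed.

Lemma pscompD a b : pscomp (psadd a b) g = psadd (pscomp a g) (pscomp b g).
Proof.
by apply: ps_ext => n; rewrite /pscomp /psadd -big_split; apply: eq_bigr => k _; rewrite mulrDl.
Qed.

Lemma pscompN a : pscomp (psopp a) g = psopp (pscomp a g).
Proof.
by apply: ps_ext => n; rewrite /pscomp /psopp -sumrN; apply: eq_bigr => k _; rewrite mulNr.
Qed.

Lemma pscompB a b : pscomp (pssub a b) g = pssub (pscomp a g) (pscomp b g).
Proof. by rewrite /pssub pscompD pscompN. Qed.

Lemma pscomp1 : pscomp ps1 g = ps1.
Proof.
apply: ps_ext => n; rewrite /pscomp big_ord_recl big1 => [|i _]; last by rewrite /ps1 mul0r.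
by rewrite /ps1 /= mul1r addr0.
Qed.

Lemma pscompXl : pscomp psX g = g.
Proof.
apply: ps_ext => n; rewrite (pscomp_wide _ g0 (leqW (ltnSn n))).
rewrite 2!big_ord_recl big1 => [|i _]; last by rewrite /psX mul0r.
by rewrite /psX /= mul0r mul1r add0r addr0 mulpsC mul1ps.
Qed.

Lemma pscomp_exp a k : pscomp (psexp a k) g = psexp (pscomp a g) k.
Proof. by elim: k => [|k IHk]; rewrite ?pscomp1 // !psexpS pscompM IHk. Qed.

End Composition.

(** * Formal derivative *)

Definition psd (a : ps) : ps := fun n => n.+1%:R * a n.+1.

Lemma ps_trunc_psd N a : eq_upto N (ps_trunc N (psd a)) (ps_trunc N.+1 a)^`().
Proof.
by move=> n ltnN; rewrite coef_ps_trunc // coef_deriv coef_ps_trunc ?ltnS // /psd mulr_natl.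
Qed.

Lemma ps_truncS N a : eq_upto N (ps_trunc N.+1 a) (ps_trunc N a).
Proof. by move=> n ltnN; rewrite !coef_ps_trunc // ltnS ltnW. Qed.

Lemma psdM a b : psd (psmul a b) = psadd (psmul (psd a) b) (psmul a (psd b)).
Proof.
apply: ps_ext => n; have ltnN := ltnSn n.
rewrite /psd /psadd (psmul_trunc _ _ (ltnSn n.+1)) mulr_natl -coef_deriv derivM coefD.
rewrite (eq_upto_mul (fun m h => esym (ps_trunc_psd _ a m h)) (ps_truncS _ b) _ ltnN).
rewrite (eq_upto_mul (ps_truncS _ a) (fun m h => esym (ps_trunc_psd _ b m h)) _ ltnN).
by rewrite -!(psmul_trunc _ _ ltnN).
Qed.

Lemma psdD a b : psd (psadd a b) = psadd (psd a) (psd b).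
Proof. by apply: ps_ext => n; rewrite /psd /psadd mulrDr. Qed.

Lemma psdN a : psd (psopp a) = psopp (psd a).
Proof. by apply: ps_ext => n; rewrite /psd /psopp mulrN. Qed.

Lemma psdB a b : psd (pssub a b) = pssub (psd a) (psd b).
Proof. by rewrite /pssub psdD psdN. Qed.

Lemma psd1 : psd ps1 = ps0.
Proof. by apply: ps_ext => n; rewrite /psd /ps1 /ps0 /= mulr0. Qed.

Lemma psdX : psd psX = ps1.
Proof. by apply: ps_ext => -[|n]; rewrite /psd /ps1 /psX /= ?mulr1 ?mulr0. Qed.

Lemma psd_1sub4x : psd (pssub ps1 ps4x) = psopp (psadd (psadd ps1 ps1) (psadd ps1 ps1)).
Proof. by rewrite psdB psd1 /ps4x !psdD psdX; ring. Qed.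

Lemma psd_eq0_eq1 a : psd a = ps0 -> a 0 = 1 -> a = ps1.
Proof.
move=> da0 a0; apply: ps_ext => -[|n] //; have /eqP := congr1 (fun f => f n) da0.
by rewrite /psd /ps0 /ps1 mulf_eq0 pnatr_eq0 => /eqP.
Qed.

(** * Central binomial and Catalan series *)

Lemma central_bin_sub k : ('C(k.*2, k) = k.+1 * ('C(k.*2, k) - 'C(k.*2, k.+1)))%N.
Proof. by have := mul_bin_left k.*2 k; rewrite (_ : k.*2 - k = k)%N; [nia | lia]. Qed.

Lemma catalan_mulS k : (catalan k * k.+1 = 'C(k.*2, k))%N.
Proof. by rewrite /catalan {1}central_bin_sub mulKn // mulnC -central_bin_sub. Qed.

Lemma central_binS n : (n.+1 * 'C(n.+1.*2, n.+1) = (4 * n + 2) * 'C(n.*2, n))%N.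
Proof.
have := mul_bin_diag n.+1.*2 n; have := mul_bin_diag n.*2.+1 n.
have -> : 'C(n.*2.+1, n.+1) = 'C(n.*2.+1, n) by rewrite -bin_sub; [congr binomial|]; lia.
rewrite doubleS /=; nia.
Qed.

Lemma catalanS k : (k.+2 * catalan k.+1 = (4 * k + 2) * catalan k)%N.
Proof.
apply/eqP; rewrite -(eqn_pmul2l (ltn0Sn k)); apply/eqP.
have := catalan_mulS k.+1; have := catalan_mulS k; have := central_binS k; nia.
Qed.

Definition psbin (j : nat) : ps := fun m => 'C(2 * m + j, m)%:Z.

Local Notation D := (psbin 0).
Local Notation P := (psmul psX Cps).

Lemma psbin_pascal j : psbin j.+1 = psadd (psbin j) (psmul psX (psbin j.+2)).
Proof.
apply: ps_ext => -[|m]; rewrite /psadd ?psmulX_coef0 ?psmulX_coefS /psbin.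
  by rewrite !bin0 addr0.
rewrite (_ : 2 * m.+1 + j.+1 = (2 * m.+1 + j).+1)%N ?binS; last by lia.
by rewrite (_ : 2 * m + j.+2 = 2 * m.+1 + j)%N; [lia | lia].
Qed.

Lemma psbin0_pascal : D = psadd ps1 (psadd (psmul psX (psbin 1)) (psmul psX (psbin 1))).
Proof.
apply: ps_ext => -[|m]; rewrite /psadd ?psmulX_coef0 ?psmulX_coefS /psbin /ps1 /=.
  by rewrite bin0 !addr0.
rewrite (_ : 2 * m.+1 + 0 = (2 * m + 1).+1)%N ?binS; last by lia.
have -> : 'C(2 * m + 1, m.+1) = 'C(2 * m + 1, m) by rewrite -bin_sub; [congr binomial|]; lia.
lia.
Qed.

Lemma psbin0_ode : psmul (pssub ps1 ps4x) (psd D) = psadd D D.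
Proof.
apply: ps_ext => -[|n]; rewrite ?psmul_1sub4x_coef0 ?psmul_1sub4x_coefS /psd /psadd /psbin //.
have := central_binS n.+1; rewrite !addn0 !mul2n; lia.
Qed.

Lemma xcatalan_ode : psmul (pssub ps1 ps4x) (psd P) = pssub ps1 (psadd P P).
Proof.
apply: ps_ext => -[|n].
  by rewrite psmul_1sub4x_coef0 /psd /pssub /psadd /psopp psmulX_coefS psmulX_coef0.
rewrite psmul_1sub4x_coefS /psd /pssub /psadd /psopp !psmulX_coefS /ps1 /Cps /=.
have := catalanS n; lia.
Qed.

Lemma psbin0_sqr : psmul (psmul D D) (pssub ps1 ps4x) = ps1.
Proof.
apply: psd_eq0_eq1; last first.
  by rewrite !psmul_coef0 /pssub /psadd /psopp /ps4x /psadd /psX /psbin /ps1 /= bin0; lia.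
rewrite !psdM psd_1sub4x.
transitivity (psmul (psadd D D) (pssub (psmul (pssub ps1 ps4x) (psd D)) (psadd D D))).
  by ring.
by rewrite psbin0_ode; ring.
Qed.

Local Notation Dinv := (pssub ps1 (psadd P P)).

Lemma psbin0_inv : psmul Dinv D = ps1.
Proof.
apply: psd_eq0_eq1; last first.
  by rewrite psmul_coef0 /pssub /psadd /psopp psmulX_coef0 /ps1 /psbin /= subr0 mul1r.
have dDinvD_1sub4x : psmul (psd (psmul Dinv D)) (pssub ps1 ps4x) = ps0.
  rewrite psdM psdB psd1 psdD.
  transitivity (psadd (psmul (psopp (psadd D D)) (psmul (pssub ps1 ps4x) (psd P)))
                      (psmul Dinv (psmul (pssub ps1 ps4x) (psd D)))); first by ring.
  by rewrite xcatalan_ode psbin0_ode; ring.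
transitivity (psmul (psd (psmul Dinv D)) (psmul (psmul D D) (pssub ps1 ps4x))).
  by rewrite psbin0_sqr; ring.
transitivity (psmul (psmul (psd (psmul Dinv D)) (pssub ps1 ps4x)) (psmul D D)); first by ring.
by rewrite dDinvD_1sub4x; ring.
Qed.

Lemma catalan_mul_psbin0 : psmul Cps D = psbin 1.
Proof.
have twoxB1 : psadd (psmul psX (psbin 1)) (psmul psX (psbin 1)) = pssub D ps1.
  by rewrite [in RHS]psbin0_pascal; ring.
have twoxCD : psadd (psmul psX (psmul Cps D)) (psmul psX (psmul Cps D)) = pssub D ps1.
  by rewrite -[in RHS]psbin0_inv; ring.
apply: esym; apply: pssub_eq0; apply: psmul4x_eq0.
transitivity (psadd (pssub (psadd (psmul psX (psbin 1)) (psmul psX (psbin 1)))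
                           (psadd (psmul psX (psmul Cps D)) (psmul psX (psmul Cps D))))
                    (pssub (psadd (psmul psX (psbin 1)) (psmul psX (psbin 1)))
                           (psadd (psmul psX (psmul Cps D)) (psmul psX (psmul Cps D))))).
  by rewrite /ps4x; ring.
by rewrite twoxB1 twoxCD; ring.
Qed.

Lemma catalan_quadratic : Cps = psadd ps1 (psmul psX (psmul Cps Cps)).
Proof.
apply: esym; apply: pssub_eq0; apply: psmul4x_eq0.
transitivity (psadd (psmul (psmul Dinv Dinv) (pssub ps1 (psmul (psmul D D) (pssub ps1 ps4x))))
                    (psmul (pssub (psmul (psmul Dinv D) (psmul Dinv D)) ps1) (pssub ps1 ps4x))).
  by rewrite /ps4x; ring.
by rewrite psbin0_sqr psbin0_inv; ring.
Qed.

Lemma psbin_catalan j : psbin j = psmul (psexp Cps j) D.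
Proof.
suff : psbin j = psmul (psexp Cps j) D /\ psbin j.+1 = psmul (psexp Cps j.+1) D by case.
elim: j => [|j [IHj IHj1]].
  by split; rewrite ?psexpS psexp0 -?catalan_mul_psbin0; ring.
split=> //; apply: pssub_eq0; apply: psmulX_eq0.
transitivity (pssub (pssub (psadd (psmul (psexp Cps j) D) (psmul psX (psbin j.+2)))
                           (psmul (psexp Cps j.+1) D))
                    (psmul (psmul (psexp Cps j) D)
                           (pssub (psadd ps1 (psmul psX (psmul Cps Cps))) Cps))).
  by rewrite !psexpS; ring.
by rewrite -IHj -IHj1 -psbin_pascal -catalan_quadratic; ring.
Qed.

Definition psnegbin (k : nat) : ps := fun l => 'C(l + k, l)%:Z.

Lemma psnegbin0_mul : psmul (psnegbin 0) (pssub ps1 psX) = ps1.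
Proof.
have -> : psmul (psnegbin 0) (pssub ps1 psX) = pssub (psnegbin 0) (psmul psX (psnegbin 0)) by ring.
apply: ps_ext => -[|l]; rewrite /pssub /psadd /psopp ?psmulX_coef0 ?psmulX_coefS /psnegbin /ps1 /=.
  by rewrite subr0.
by rewrite !addn0 !binn subrr.
Qed.

Lemma psnegbinS_mul k : psmul (psnegbin k.+1) (pssub ps1 psX) = psnegbin k.
Proof.
have -> : psmul (psnegbin k.+1) (pssub ps1 psX) =
          pssub (psnegbin k.+1) (psmul psX (psnegbin k.+1)) by ring.
apply: ps_ext => -[|l]; rewrite /pssub /psadd /psopp ?psmulX_coef0 ?psmulX_coefS /psnegbin.
  by rewrite !bin0 subr0.
rewrite addSn binS addnS addSn; lia.
Qed.

(** * Substituting F(x)^2 *)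

Local Notation G := (psexp Fps 2).
Local Notation K := (pscomp Cps G).
Local Notation Dc := (pscomp D G).
Local Notation Q := (pssub ps1 (psadd psX (psmul psX psX))).

Lemma psexp_Fps_coef0 k : psexp Fps k.+1 0 = 0.
Proof. by rewrite psexpS psmul_coef0 mul0r. Qed.

Lemma Fps_mul_den : psmul Fps Q = psX.
Proof.
transitivity (pssub (pssub Fps (psmul psX Fps)) (psmul psX (psmul psX Fps))); first by ring.
apply: ps_ext => -[|[|n]];
  rewrite /pssub /psadd /psopp ?psmulX_coef0 ?psmulX_coefS ?psmulX_coef0 /psX /Fps /=.
- by rewrite !subr0.
- by rewrite subr0.
- lia.
Qed.

Local Notation H := (psadd psX (psmul psX psX)).

Lemma H_coef0 : H 0 = 0.
Proof. by rewrite /psadd psmulX_coef0. Qed.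

(* [inv_den_powS k] is (1 - x - x^2)^(-(k+1)), i.e. (1 - x)^(-(k+1)) at x := x + x^2. *)
Definition inv_den_powS (k : nat) : ps := pscomp (psnegbin k) H.

Lemma inv_den_powS0 : psmul (inv_den_powS 0) Q = ps1.
Proof.
have := congr1 (pscomp^~ H) psnegbin0_mul.
by rewrite pscompM ?pscompB ?pscomp1 ?pscompXl ?H_coef0.
Qed.

Lemma inv_den_powSS k : psmul (inv_den_powS k.+1) Q = inv_den_powS k.
Proof.
have := congr1 (pscomp^~ H) (psnegbinS_mul k).
by rewrite pscompM ?pscompB ?pscomp1 ?pscompXl ?H_coef0.
Qed.

Lemma Fps_expS k : psexp Fps k.+1 = psmul (psexp psX k.+1) (inv_den_powS k).
Proof.
elim: k => [|k IHk].
  transitivity (psmul Fps (psmul (inv_den_powS 0) Q)).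
    by rewrite inv_den_powS0 !psexpS !psexp0; ring.
  transitivity (psmul (psmul Fps Q) (inv_den_powS 0)); first by ring.
  by rewrite Fps_mul_den !psexpS !psexp0; ring.
rewrite psexpS IHk -inv_den_powSS.
transitivity (psmul (psmul Fps Q) (psmul (psexp psX k.+1) (inv_den_powS k.+1))); first by ring.
by rewrite Fps_mul_den [psexp psX k.+2]psexpS; ring.
Qed.

Lemma psexp_H_coef l t : (l <= t)%N -> psexp H l t = 'C(l, t - l)%:Z.
Proof.
move=> lelt; have -> : H = psmul psX (psadd ps1 psX) by ring.
by rewrite psexp_mul psmul_Xexp_coef lelt psexp_1addX_coef.
Qed.

Lemma inv_den_powS_coef k t :
  inv_den_powS k t = \sum_(l < t.+1) ('C(l + k, l) * 'C(l, t - l))%N%:Z.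
Proof.
apply: eq_bigr => l _.
by rewrite psexp_H_coef ?PoszM // -ltnS.
Qed.

Lemma K_quadratic : K = psadd ps1 (psmul G (psmul K K)).
Proof.
by rewrite {1}catalan_quadratic pscompD ?pscompM ?pscomp1 ?pscompXl ?psexp_Fps_coef0.
Qed.

Lemma Dc_inv : psmul (pssub ps1 (psadd (psmul G K) (psmul G K))) Dc = ps1.
Proof.
have := congr1 (pscomp^~ G) psbin0_inv.
by rewrite !(pscompM, pscompB, pscompD, pscomp1, pscompXl) ?psexp_Fps_coef0.
Qed.

Lemma psbin_comp j : pscomp (psbin j) G = psmul (psexp K j) Dc.
Proof. by rewrite psbin_catalan pscompM ?pscomp_exp ?psexp_Fps_coef0. Qed.

Lemma Fps_exp_mul_Gexp_coef j m n :
  psmul (psexp Fps j.+1) (psexp G m) n.+1 =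
  if (2 * m + j <= n)%N then inv_den_powS (2 * m + j) (n - (2 * m + j))%N else 0.
Proof.
rewrite psexpM -psexpD (_ : j.+1 + 2 * m = (2 * m + j).+1)%N; last by lia.
by rewrite Fps_expS psmul_Xexp_coef ltnS subSS.
Qed.

(** * The Pascal rhombus *)

Lemma rhombusSS i j : rhombus i.+2 j =
  (rhombus i.+1 (j - 1) + rhombus i.+1 j + rhombus i.+1 (j + 1) + rhombus i j)%N.
Proof. by []. Qed.

Lemma rhombus_sym i j : rhombus i (- j) = rhombus i j.
Proof.
suff : (forall j, rhombus i (- j) = rhombus i j) /\
       (forall j, rhombus i.+1 (- j) = rhombus i.+1 j) by case.
elim: i {j} => [|i [IHi IHi1]].
  by split=> j /=; [rewrite oppr_eq0 | do 2 case: ifP => //; lia].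
split=> // j; rewrite !rhombusSS.
have -> : - j - 1 = - (j + 1) by lia.
have -> : - j + 1 = - (j - 1) by lia.
rewrite !IHi1 IHi.
move: (rhombus i.+1 (j - 1)) (rhombus i.+1 (j + 1)) => a b; lia.
Qed.

Definition xL_closed (j : nat) : ps := psmul (psexp Fps j.+1) (psmul (psexp K j) Dc).

Lemma xL_closed_denS j :
  psmul (xL_closed j.+1) Q = psmul psX (psadd (xL_closed j) (xL_closed j.+2)).
Proof.
apply: pssub_eq0.
transitivity (psadd (psmul (pssub (psmul Fps Q) psX)
                           (psmul (psexp Fps j.+1) (psmul (psexp K j.+1) Dc)))
                    (psmul (psmul psX (psmul (psexp Fps j.+1) (psmul (psexp K j) Dc)))
                           (pssub K (psadd ps1 (psmul G (psmul K K)))))).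
  by rewrite /xL_closed !psexpS !psexp0; ring.
by rewrite Fps_mul_den -K_quadratic; ring.
Qed.

Lemma xL_closed_den0 :
  psmul (xL_closed 0) Q = psadd psX (psadd (psmul psX (xL_closed 1)) (psmul psX (xL_closed 1))).
Proof.
apply: pssub_eq0.
transitivity (psadd (psmul (pssub (psmul Fps Q) psX) Dc)
                    (psmul psX (pssub (psmul (pssub ps1 (psadd (psmul G K) (psmul G K))) Dc) ps1))).
  by rewrite /xL_closed !psexpS !psexp0; ring.
by rewrite Fps_mul_den Dc_inv; ring.
Qed.

Lemma psmul_den_unfold {a b} : psmul a Q = b ->
  a = psadd b (psadd (psmul psX a) (psmul psX (psmul psX a))).
Proof. by move=> <-; ring. Qed.

Lemma xL_closed_coef0 j : xL_closed j 0 = 0.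
Proof. by rewrite /xL_closed psmul_coef0 psexp_Fps_coef0 mul0r. Qed.

Lemma xL_closed0_coef1 : xL_closed 0 1 = 1.
Proof.
rewrite {1}(psmul_den_unfold xL_closed_den0) /psadd !psmulX_coefS psmulX_coef0 !xL_closed_coef0.
by rewrite /psX /= !addr0.
Qed.

Lemma xL_closedS_coef1 j : xL_closed j.+1 1 = 0.
Proof.
rewrite {1}(psmul_den_unfold (xL_closed_denS j)) /psadd !psmulX_coefS psmulX_coef0 !xL_closed_coef0.
by rewrite !addr0.
Qed.

Lemma xL_closed0_coefSS n :
  xL_closed 0 n.+2 = xL_closed 1 n.+1 + xL_closed 1 n.+1 + xL_closed 0 n.+1 + xL_closed 0 n.
Proof.
by rewrite {1}(psmul_den_unfold xL_closed_den0) /psadd !psmulX_coefS /psadd /psX /= add0r !addrA.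
Qed.

Lemma xL_closedS_coefSS j n :
  xL_closed j.+1 n.+2 =
  xL_closed j n.+1 + xL_closed j.+2 n.+1 + xL_closed j.+1 n.+1 + xL_closed j.+1 n.
Proof. by rewrite {1}(psmul_den_unfold (xL_closed_denS j)) /psadd !psmulX_coefS /psadd !addrA. Qed.

Lemma xL_closed_coef_rhombus i :
  (forall j : nat, xL_closed j i.+1 = (rhombus i j)%:Z) /\
  (forall j : nat, xL_closed j i.+2 = (rhombus i.+1 j)%:Z).
Proof.
elim: i => [|i [IHi IHi1]].
  split=> -[|j]; rewrite ?xL_closed0_coef1 ?xL_closedS_coef1 //.
    by rewrite xL_closed0_coefSS xL_closed0_coef1 xL_closedS_coef1 !xL_closed_coef0.
  rewrite xL_closedS_coefSS !xL_closedS_coef1 xL_closed_coef0.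
  by case: j => [|j]; rewrite ?xL_closed0_coef1 ?xL_closedS_coef1.
split=> // -[|j].
  rewrite xL_closed0_coefSS !IHi1 IHi rhombusSS sub0r add0r rhombus_sym.
  by rewrite (_ : (1 : int) = Posz 1) //; lia.
rewrite xL_closedS_coefSS !IHi1 IHi rhombusSS.
have -> : j.+1%:Z - 1 = j%:Z by lia.
have -> : j.+1%:Z + 1 = j.+2%:Z by lia.
lia.
Qed.

Lemma xL_closed_Lps j : xL_closed j = psmul psX (Lps j).
Proof.
apply: ps_ext => -[|n]; first by rewrite psmulX_coef0 xL_closed_coef0.
by rewrite psmulX_coefS (xL_closed_coef_rhombus n).1.
Qed.

Lemma column_gf j :
  psmul (psmul psX (psadd ps1 (psopp (psscale 2 (psmul G K))))) (Lps j) =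
  psmul (psexp Fps j.+1) (psexp K j).
Proof.
rewrite psscale2.
transitivity (psmul (pssub ps1 (psadd (psmul G K) (psmul G K))) (psmul psX (Lps j))).
  by rewrite /pssub; ring.
rewrite -xL_closed_Lps /xL_closed.
transitivity (psmul (psmul (psexp Fps j.+1) (psexp K j))
                    (psmul (pssub ps1 (psadd (psmul G K) (psmul G K))) Dc)); first by ring.
by rewrite Dc_inv; ring.
Qed.

Lemma rhombus_sum i j : rhombus i j%:Z =
  (\sum_(m < i.+1 | (j + 2 * m <= i)%N) \sum_(l < (i - j - 2 * m).+1)
     'C(2 * m + j, m) * 'C(l + j + 2 * m, l) * 'C(l, i - j - 2 * m - l))%N.
Proof.
apply/eqP; rewrite -eqz_nat; apply/eqP.
rewrite -(xL_closed_coef_rhombus i).1 /xL_closed -psbin_comp psmul_pscomp_coef ?psexp_Fps_coef0 //.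
under eq_bigr do rewrite Fps_exp_mul_Gexp_coef.
rewrite big_ord_recr /= ifF ?mulr0 ?addr0; last by lia.
rewrite (big_morph Posz PoszD (erefl _)) [RHS]big_mkcond /=.
apply: eq_bigr => m _; rewrite [(2 * m + j)%N]addnC.
case: ifP => lei; last by rewrite mulr0.
rewrite inv_den_powS_coef (_ : i - (j + 2 * m) = i - j - 2 * m)%N; last by lia.
rewrite (big_morph Posz PoszD (erefl _)) mulr_sumr; apply: eq_bigr => l _.
by rewrite !PoszM mulrA /psbin addnC (_ : l + (j + 2 * m) = l + j + 2 * m)%N; last by lia.
Qed.

Theorem corollary2p4 :
  (forall (j : nat) (n : nat),
      psmul (psmul psX
               (psadd ps1 (psopp (psscale 2 (psmul (psexp Fps 2)
                                               (pscomp Cps (psexp Fps 2)))))))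
            (Lps j) n
      = psmul (psexp Fps j.+1) (psexp (pscomp Cps (psexp Fps 2)) j) n)
  /\
  (forall (i j : nat), (j <= i)%N ->
      rhombus i j%:Z =
      (\sum_(m < i.+1 | (j + 2 * m <= i)%N)
         \sum_(l < (i - j - 2 * m).+1)
            'C(2 * m + j, m) * 'C(l + j + 2 * m, l) * 'C(l, i - j - 2 * m - l))%N).
Proof.
split=> [j n | i j _]; first by rewrite column_gf.
exact: rhombus_sum.
Qed.
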